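(* Define $F=(n_F)_{n\ge0}$ by $0_F=1$ and, for $n\ge1$, $n_F=a_n b_n$ where $a_n=2$ if $n$ is even and $a_n=1$ if $n$ is odd, and $b_n=3$ if $3\mid n$ and $b_n=1$ otherwise (so $F=1;\,1,2,3,2,1,6,1,2,3,\dots$ listing from $n=0$). Then $F$ is cobweb-admissible, but the layer $\langle\Phi_5\to\Phi_7\rangle$ of its cobweb poset (whose levels have $1,6,1$ vertices) admits no tiling by blocks of type $\sigma P_3$. Consequently, not every cobweb-admissible sequence is a cobweb tiling sequence.
   Context: Notation: $n_F\equiv F_n$. A sequence $F=(n_F)_{n\ge0}$ of natural numbers with $0_F=1$ is cobweb-admissible iff every $F$-nomial coefficient $\binom{n}{k}_F=\frac{n_F(n-1)_F\cdots(n-k+1)_F}{1_F2_F\cdots k_F}$, $0\le k\le n$, is a nonnegative integer. The cobweb poset of $F$ has, for each $s\ge1$, a level $\Phi_s$ consisting of $s_F$ distinct vertices (levels pairwise disjoint), plus a root level $\Phi_0$ with one vertex; for $x\in\Phi_i$, $y\in\Phi_j$ one has $x<y$ iff $i<j$. For $1\le a\le b$, the layer $\langle\Phi_a\to\Phi_b\rangle$ is the subposet on $\Phi_a\cup\dots\cup\Phi_b$; it has $m=b-a+1$ levels and its maximal chains form the set $\Phi_a\times\dots\times\Phi_b$. For a permutation $\sigma$ of $\{1,\dots,m\}$, a block of type $\sigma P_m$ in this layer is the subposet induced on $V_a\cup\dots\cup V_b$ where $V_{a-1+i}\subseteq\Phi_{a-1+i}$ and $|V_{a-1+i}|=\sigma(i)_F$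 for $i=1,\dots,m$; its maximal chains form the set $V_a\times\dots\times V_b$. A tiling of the layer is a finite family of such blocks ($\sigma$ may vary from block to block) whose sets $V_a\times\dots\times V_b$ partition $\Phi_a\times\dots\times\Phi_b$ (pairwise max-disjoint and covering all maximal chains). A cobweb tiling sequence is a cobweb-admissible sequence $F$ such that for all $1\le a\le b$ the layer $\langle\Phi_a\to\Phi_b\rangle$ admits a tiling by blocks of type $\sigma P_{b-a+1}$. *)

From mathcomp Require Import all_boot all_order all_fingroup.
Set Implicit Arguments. Unset Strict Implicit. Unset Printing Implicit Defensive.

Definition fnum (F : nat -> nat) (n k : nat) : nat :=
  \prod_(n.+1 - k <= i < n.+1) F i.
Definition fden (F : nat -> nat) (k : nat) : nat :=
  \prod_(1 <= i < k.+1) F i.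

(* cobweb-admissible: 0_F = 1 and every F-nomial coefficient is a
   nonnegative integer (denominator nonzero and divides the numerator) *)
Definition cobweb_admissible (F : nat -> nat) : Prop :=
  F 0 = 1 /\
  forall n k, k <= n -> 0 < fden F k /\ fden F k %| fnum F n k.

(* Layer <Phi_a -> Phi_(a+m-1)>: level a+i (i : 'I_m) is 'I_(F (a+i)).
   A maximal chain picks one vertex on each level. *)
Definition layer_chain (F : nat -> nat) (a m : nat) : Type :=
  forall i : 'I_m, 'I_(F (a + i)).

Definition layer_subsets (F : nat -> nat) (a m : nat) : Type :=
  forall i : 'I_m, {set 'I_(F (a + i))}.

(* block of type sigma P_m: |V_(a-1+i)| = sigma(i)_F for i = 1..m;
   with 0-based i : 'I_m this reads #|V (a+i)| = F ((sigma i) + 1). *)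
Definition is_block (F : nat -> nat) (a m : nat) (s : {perm 'I_m})
    (V : layer_subsets F a m) : Prop :=
  forall i : 'I_m, #|V i| = F (s i).+1.

Definition chain_in_block (F : nat -> nat) (a m : nat)
    (V : layer_subsets F a m) (c : layer_chain F a m) : Prop :=
  forall i : 'I_m, c i \in V i.

Definition layer_tileable (F : nat -> nat) (a b : nat) : Prop :=
  exists (k : nat) (sig : 'I_k -> {perm 'I_(b - a).+1})
         (V : 'I_k -> layer_subsets F a (b - a).+1),
    (forall j, is_block (sig j) (V j)) /\
    (forall c : layer_chain F a (b - a).+1,
        exists! j : 'I_k, chain_in_block (V j) c).

Definition cobweb_tiling_sequence (F : nat -> nat) : Prop :=
  cobweb_admissible F /\
  forall a b, 1 <= a -> a <= b -> layer_tileable F a b.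

Definition Fex (n : nat) : nat :=
  if n == 0 then 1
  else (if odd n then 1 else 2) * (if 3 %| n then 3 else 1).

From mathcomp Require Import all_boot all_order all_fingroup.
Set Implicit Arguments. Unset Strict Implicit. Unset Printing Implicit Defensive.

(* For n >= 1 the example sequence factors as
   Fex n = f_2,2(n) * f_3,3(n), where f_p,q(n) = q if p | n and 1 otherwise.
   The prefix product of f_p,q over 1..n is q ^ (n %/ p); since
   (n-k) %/ p + k %/ p <= n %/ p, the F-nomial denominator of f_p,q divides
   its numerator.  This divisibility property is preserved by pointwise
   products, so it holds for Fex; positivity of the denominators is clear.  In a block, a level of the layer with a single vertex
   must receive a sigma-value t with F (t+1) <= 1.  The layer <Phi_5 -> Phi_7>
   has two singleton levels (5_F = 7_F = 1), so each block would need two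
   distinct t < 3 with Fex (t+1) <= 1, whereas only t = 0 qualifies.  Since
   the layer has at least one maximal chain, a tiling has at least one block,
   a contradiction. *)

Definition nomial_divisible (F : nat -> nat) : Prop :=
  forall n k, k <= n -> fden F k %| fnum F n k.

Lemma prefix_prod_split (F : nat -> nat) n k : k <= n ->
  fden F n = fden F (n - k) * fnum F n k.
Proof.
move=> le_kn; rewrite /fden /fnum -subSn // -big_cat_nat ?subSn ?ltnS ?leq_subr //.
Qed.

Lemma nomial_divisible_mul (G H : nat -> nat) :
  nomial_divisible G -> nomial_divisible H ->
  nomial_divisible (fun i => G i * H i).
Proof.
move=> dG dH n k le_kn; rewrite /fden /fnum !big_split /=.
exact: dvdn_mul (dG n k le_kn) (dH n k le_kn).
Qed.

Lemma nomial_divisible_eq (F G : nat -> nat) :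
  (forall i, 0 < i -> F i = G i) -> nomial_divisible G -> nomial_divisible F.
Proof.
move=> eqFG dG n k le_kn.
have eq_prod m l : 0 < m -> \prod_(m <= i < l) F i = \prod_(m <= i < l) G i.
  by move=> m_gt0; apply: eq_big_nat => i /andP[le_mi _]; apply/eqFG/(leq_trans m_gt0).
by have := dG n k le_kn; rewrite /fden /fnum !eq_prod ?subSn.
Qed.

Definition periodic_factor (p q i : nat) : nat := if p %| i then q else 1.

Lemma periodic_factor_prefix p q n : 0 < p ->
  fden (periodic_factor p q) n = q ^ (n %/ p).
Proof.
move=> p_gt0; rewrite /fden; elim: n => [|n IHn]; first by rewrite big_geq // div0n.
rewrite big_nat_recr //= IHn divnS // /periodic_factor.
by case: (p %| n.+1); rewrite ?expnS ?muln1 // mulnC.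
Qed.

(* Divisibility for the periodic factor: (n-k)/p + k/p <= n/p. *)
Lemma periodic_factor_divisible p q : 0 < p -> 0 < q ->
  nomial_divisible (periodic_factor p q).
Proof.
move=> p_gt0 q_gt0 n k le_kn.
have split_n := prefix_prod_split (periodic_factor p q) le_kn.
rewrite !periodic_factor_prefix // in split_n.
have le_exp : (n - k) %/ p + k %/ p <= n %/ p.
  by rewrite -{2}(subnK le_kn) divnD // leq_addr.
rewrite periodic_factor_prefix // -(@dvdn_pmul2l (q ^ ((n - k) %/ p))) ?expn_gt0 ?q_gt0 //.
by rewrite -split_n -expnD dvdn_exp2l.
Qed.

Lemma Fex_factor i : 0 < i -> Fex i = periodic_factor 2 2 i * periodic_factor 3 3 i.
Proof. by rewrite /Fex /periodic_factor dvdn2; case: i => // i _; case: odd. Qed.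

Lemma Fex_pos n : 0 < Fex n.
Proof. by rewrite /Fex; case: (n == 0); rewrite // muln_gt0; case: odd; case: (3 %| n). Qed.

Lemma Fex_admissible : cobweb_admissible Fex.
Proof.
split=> // n k le_kn; split.
  by rewrite /fden prodn_gt0 // => i; apply: Fex_pos.
apply: (nomial_divisible_eq Fex_factor) => //.
by apply: nomial_divisible_mul; apply: periodic_factor_divisible.
Qed.

(* A layer all of whose levels are nonempty has a maximal chain, hence any
   tiling of it contains at least one block. *)
Lemma tiling_has_block (F : nat -> nat) a b : (forall i, 0 < F i) ->
  layer_tileable F a b ->
  exists (s : {perm 'I_(b - a).+1}) (V : layer_subsets F a (b - a).+1), is_block s V.
Proof.
move=> F_pos [k [sig [V [blockV cover]]]].
have [j _] := cover (fun i => Ordinal (F_pos (a + i))).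
by exists (sig j), (V j).
Qed.

Lemma block_singleton_levels (F : nat -> nat) a m (s : {perm 'I_m})
    (V : layer_subsets F a m) (i j : 'I_m) :
  is_block s V -> i != j -> F (a + i) <= 1 -> F (a + j) <= 1 ->
  [/\ s i != s j, F (s i).+1 <= 1 & F (s j).+1 <= 1].
Proof.
move=> blockV ne_ij Fi Fj.
have small (l : 'I_m) : F (a + l) <= 1 -> F (s l).+1 <= 1.
  by move=> Fl; rewrite -blockV (leq_trans (max_card _)) // card_ord.
by rewrite (inj_eq perm_inj) ne_ij !small.
Qed.

Lemma Fex_not_tileable : ~ layer_tileable Fex 5 7.
Proof.
move=> /(tiling_has_block Fex_pos) [s [V blockV]].
have [] := block_singleton_levels (i := ord0) (j := ord_max) blockV erefl erefl erefl.
have only_first (t : 'I_3) : Fex t.+1 <= 1 -> t = ord0.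
  by move=> small; apply: val_inj; move: small; case: t => [[|[|[|]]]].
by move=> ne small0 small2; rewrite (only_first _ small0) (only_first _ small2) in ne.
Qed.

Theorem theorem3 :
  cobweb_admissible Fex /\
  ~ layer_tileable Fex 5 7 /\
  (exists F : nat -> nat, cobweb_admissible F /\ ~ cobweb_tiling_sequence F).
Proof.
split; first exact: Fex_admissible.
split; first exact: Fex_not_tileable.
exists Fex; split; first exact: Fex_admissible.
by case=> _ tileable; apply: Fex_not_tileable; apply: tileable.
Qed.
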